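(* Let $n\ge1$ and $\gamma\in PSL(n+1,\mathbb{C})$. Then there exists $h\in PSL(n+1,\mathbb{C})$ with $h^{-1}\gamma h(T(r))=T(r)$ for all $r>0$, where $T(r)=\{[z_1:\dots:z_{n+1}]:\sum_{j=1}^n|z_j|^2=r|z_{n+1}|^2\}$, if and only if $\gamma$ is conjugate in $PSL(n+1,\mathbb{C})$ to an elliptic element of $PU(n,1)$.
   Context: $PU(n,1)$ is the image in $PSL(n+1,\mathbb{C})$ of the group of matrices preserving the Hermitian form $\sum_{j=1}^n z_j\bar w_j-z_{n+1}\bar w_{n+1}$; it preserves the complex hyperbolic ball $B=\{[z]\in\mathbb{P}^n_{\mathbb{C}}:\sum_{j=1}^n|z_j|^2<|z_{n+1}|^2\}$, and an element of $PU(n,1)$ is elliptic if it has a fixed point in $B$. *)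

From HB Require Import structures.
From mathcomp Require Import all_boot all_order all_algebra.
From mathcomp Require Import complex.
From mathcomp Require Import reals.
Set Implicit Arguments. Unset Strict Implicit. Unset Printing Implicit Defensive.
Import Order.TTheory GRing.Theory Num.Theory.
Local Open Scope ring_scope.
Local Open Scope complex_scope.

Section Defs.
Variables (R : realType) (n : nat).
Local Notation C := (R[i]).

(* Points of P^n_C are represented by nonzero column vectors z in C^{n+1};
   the last coordinate (index ord_max) is z_{n+1}. *)

Definition head_sq (z : 'cV[C]_(n.+1)) : C :=
  \sum_(j < n.+1 | (j < n)%N) `|z j 0| ^+ 2.

Definition last_sq (z : 'cV[C]_(n.+1)) : C := `|z ord_max 0| ^+ 2.

Definition inT (r : C) (z : 'cV[C]_(n.+1)) : Prop := head_sq z = r * last_sq z.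

Definition inB (z : 'cV[C]_(n.+1)) : Prop := head_sq z < last_sq z.

Definition maps_T_onto (g : 'M[C]_(n.+1)) (r : C) : Prop :=
  (forall z : 'cV[C]_(n.+1), z != 0 -> inT r z -> inT r (g *m z)) /\
  (forall w : 'cV[C]_(n.+1), w != 0 -> inT r w ->
     exists2 z : 'cV[C]_(n.+1), z != 0 & inT r z /\ exists2 c : C, c != 0 & g *m z = c *: w).

Definition Jform : 'M[C]_(n.+1) :=
  \matrix_(i, j) (if i == j then (if (i < n)%N then 1 else -1) else 0).

Definition preserves_form (A : 'M[C]_(n.+1)) : Prop :=
  (map_mx Num.conj A)^T *m Jform *m A = Jform.

(* An element of PSL(n+1,C) lies in PU(n,1) and is elliptic: the class of g
   in PSL = PGL equals the class of some A preserving the form, and A has a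
   fixed point in B. *)
Definition elliptic_PU (g : 'M[C]_(n.+1)) : Prop :=
  exists A : 'M[C]_(n.+1), preserves_form A /\
    (exists2 c : C, c != 0 & g = c *: A) /\
    (exists z : 'cV[C]_(n.+1), z != 0 /\ inB z /\ exists lam : C, A *m z = lam *: z).

End Defs.

(* If g maps every T(r) into itself, then for w with w_{n+1} = 0 and t > 0 the
   point w + t e_{n+1} lies on T(|w|^2 / t^2); the resulting polynomial identity
   in t forces g to fix the centre e_{n+1} of B, to kill the rest of the last
   row, and to multiply |z_1|^2 + ... + |z_n|^2 on the hyperplane z_{n+1} = 0 by
   |g_{n+1,n+1}|^2.  Hence g multiplies the Hermitian form of signature (n,1)
   by |g_{n+1,n+1}|^2 (by polarization), i.e. g is a multiple of an element of
   U(n,1) fixing the centre of the ball.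
   Conversely, a complex hyperbolic boost conjugates an elliptic element of
   U(n,1) fixing [z] in B into the stabilizer of the centre; that stabilizer
   preserves both |z_1|^2 + ... + |z_n|^2 and |z_{n+1}|^2, hence every T(r).
   A scalar multiple of the conjugator has determinant 1. *)

From HB Require Import structures.
From mathcomp Require Import all_boot all_order all_algebra.
From mathcomp Require Import complex reals ring.
Import Order.TTheory GRing.Theory Num.Theory.
Set Implicit Arguments. Unset Strict Implicit. Unset Printing Implicit Defensive.
Local Open Scope ring_scope.

Lemma poly_nat_roots_eq0 (F : numDomainType) (p : {poly F}) k :
  (size p <= k)%N -> (forall i, (0 < i <= k)%N -> p.[i%:R] = 0) -> p = 0.
Proof.
move=> szp p_roots; apply: (@roots_geq_poly_eq0 _ _ [seq i.+1%:R | i <- iota 0 k]).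
- apply/allP=> x /mapP[j]; rewrite mem_iota add0n => ltjk ->.
  by apply/eqP/p_roots.
- by rewrite map_inj_uniq ?iota_uniq // => i j /eqP; rewrite eqr_nat => /eqP[].
- by rewrite size_map size_iota.
Qed.

Section ComplexMatrices.
Variable C : numClosedFieldType.

Definition adjmx p q (M : 'M[C]_(p, q)) : 'M[C]_(q, p) := (map_mx Num.conj M)^T.

Lemma adjmxM p q r (A : 'M[C]_(p, q)) (B : 'M[C]_(q, r)) :
  adjmx (A *m B) = adjmx B *m adjmx A.
Proof. by rewrite /adjmx map_mxM trmx_mul. Qed.

Lemma adjmxD p q (A B : 'M[C]_(p, q)) : adjmx (A + B) = adjmx A + adjmx B.
Proof. by apply/matrixP=> i j; rewrite !mxE rmorphD. Qed.

Lemma adjmxZ p q a (A : 'M[C]_(p, q)) : adjmx (a *: A) = a^* *: adjmx A.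
Proof. by apply/matrixP=> i j; rewrite !mxE rmorphM. Qed.

Lemma adjmx1 p : adjmx (1%:M : 'M[C]_p) = 1%:M.
Proof.
by apply/matrixP=> i j; rewrite !mxE eq_sym; case: eqP; rewrite ?rmorph1 ?rmorph0.
Qed.

Lemma adjmx_delta p q (i : 'I_p) (j : 'I_q) :
  adjmx (delta_mx i j : 'M[C]_(p, q)) = delta_mx j i.
Proof. by apply/matrixP=> a b; rewrite !mxE conjC_nat andbC. Qed.

Definition sform p (M : 'M[C]_p) (u v : 'cV[C]_p) : C := (adjmx v *m M *m u) 0 0.

Section Sform.
Variables (p : nat) (M : 'M[C]_p).
Implicit Types u v : 'cV[C]_p.

Lemma sformDl u1 u2 v : sform M (u1 + u2) v = sform M u1 v + sform M u2 v.
Proof. by rewrite /sform mulmxDr mxE. Qed.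

Lemma sformZl a u v : sform M (a *: u) v = a * sform M u v.
Proof. by rewrite /sform -scalemxAr mxE. Qed.

Lemma sformDr u v1 v2 : sform M u (v1 + v2) = sform M u v1 + sform M u v2.
Proof. by rewrite /sform adjmxD !mulmxDl mxE. Qed.

Lemma sformZr a u v : sform M u (a *: v) = a^* * sform M u v.
Proof. by rewrite /sform adjmxZ -!scalemxAl mxE. Qed.

Lemma sform_adj (g : 'M[C]_p) u v :
  sform (adjmx g *m M *m g) u v = sform M (g *m u) (g *m v).
Proof. by rewrite /sform adjmxM !mulmxA. Qed.

Lemma sform_polar u v : 2 * sform M u v =
  sform M (u + v) (u + v) - sform M u u - sform M v v
  + 'i * (sform M (u + 'i *: v) (u + 'i *: v) - sform M u u - sform M v v).
Proof.
rewrite !(sformDl, sformDr, sformZl, sformZr) conjCi.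
have sqi : 'i ^+ 2 + 1 = 0 :> C by rewrite sqrCi addNr.
transitivity (2 * sform M u v +
  ('i ^+ 2 + 1) * (sform M v u - sform M u v - 'i * sform M v v)).
  by rewrite sqi mul0r addr0.
ring.
Qed.

End Sform.

Lemma sform_delta p (M : 'M[C]_p) i j : sform M (delta_mx j 0) (delta_mx i 0) = M i j.
Proof. by rewrite /sform adjmx_delta -rowE -colE !mxE. Qed.

Lemma adjmx_congr_scale p (M g : 'M[C]_p) c :
    (forall w, sform M (g *m w) (g *m w) = c * sform M w w) ->
  adjmx g *m M *m g = c *: M.
Proof.
move=> Hq; apply/matrixP=> i j; rewrite -sform_delta sform_adj mxE -sform_delta.
set u := delta_mx j 0; set v := delta_mx i 0.
apply: (@mulfI _ 2); first by rewrite pnatr_eq0.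
rewrite sform_polar !scalemxAr -!mulmxDr !Hq mulrCA sform_polar; ring.
Qed.

Lemma invmx_mul m (A B : 'M[C]_m) : A \in unitmx -> B \in unitmx ->
  invmx (A *m B) = invmx B *m invmx A.
Proof.
move=> A_unit B_unit; have AB_unit : A *m B \in unitmx by rewrite unitmx_mul A_unit.
rewrite -[RHS]mul1mx -(mulVmx AB_unit) -!mulmxA (mulmxA B) mulmxV // mul1mx.
by rewrite mulmxV // mulmx1.
Qed.

Lemma invmx_conj_mulZ m (M h k : 'M[C]_m) rho :
    h \in unitmx -> k \in unitmx -> rho != 0 ->
  invmx (h *m (rho *: k)) *m M *m (h *m (rho *: k)) =
    invmx k *m (invmx h *m M *m h) *m k.
Proof.
move=> h_unit k_unit rho_neq0.
have rk_unit : rho *: k \in unitmx by rewrite unitmxZ ?unitfE.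
rewrite invmx_mul // invmxZ // -!scalemxAl -!scalemxAr scalerA mulVf // scale1r.
by rewrite !mulmxA.
Qed.

Lemma det_scale_eq1 m (A : 'M[C]_m.+1) : A \in unitmx ->
  exists2 rho : C, rho != 0 & \det (rho *: A) = 1.
Proof.
rewrite unitmxE unitfE => detA_neq0.
have rhoK := rootCK (ltn0Sn m) (\det A)^-1.
exists (m.+1.-root (\det A)^-1); last by rewrite detZ rhoK mulVf.
apply/eqP => rho0; move: rhoK; rewrite rho0 expr0n /= => /esym/eqP.
by rewrite invr_eq0 (negbTE detA_neq0).
Qed.

End ComplexMatrices.

Section ComplexBall.
Variables (R : realType) (n : nat).
Local Notation C := R[i].
Local Notation cv := 'cV[C]_(n.+1).
Local Notation J := (Jform R n).
Implicit Types (u v w z : cv) (A B g : 'M[C]_(n.+1)).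

Definition centre : cv := delta_mx ord_max 0.

Definition hdot u v : C := \sum_(j < n.+1 | (j < n)%N) u j 0 * (v j 0)^*.

Lemma ltn_ord_max (j : 'I_n.+1) : (j < n)%N = (j != ord_max).
Proof. by rewrite -(inj_eq val_inj) /= ltn_neqAle -ltnS ltn_ord andbT. Qed.

Lemma big_ord_max (G : 'I_n.+1 -> C) :
  \sum_j G j = \sum_(j < n.+1 | (j < n)%N) G j + G ord_max.
Proof.
rewrite (bigD1 ord_max) //= addrC; congr (_ + _).
by apply: eq_bigl => j /=; rewrite ltn_ord_max.
Qed.

Lemma coordDZ u v t i : (u + t *: v) i 0 = u i 0 + t * v i 0.
Proof. by rewrite !mxE. Qed.

Lemma head_sqE u : head_sq u = hdot u u.
Proof. by apply: eq_bigr => j _; rewrite normCK. Qed.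

Lemma last_sqE u : last_sq u = u ord_max 0 * (u ord_max 0)^*.
Proof. exact: normCK. Qed.

Lemma hdotDl u1 u2 v : hdot (u1 + u2) v = hdot u1 v + hdot u2 v.
Proof. by rewrite /hdot -big_split; apply: eq_bigr => j _; rewrite !mxE mulrDl. Qed.

Lemma hdotDr u v1 v2 : hdot u (v1 + v2) = hdot u v1 + hdot u v2.
Proof.
by rewrite /hdot -big_split; apply: eq_bigr => j _; rewrite !mxE rmorphD mulrDr.
Qed.

Lemma hdotZl a u v : hdot (a *: u) v = a * hdot u v.
Proof. by rewrite /hdot mulr_sumr; apply: eq_bigr => j _; rewrite !mxE mulrA. Qed.

Lemma hdotZr a u v : hdot u (a *: v) = a^* * hdot u v.
Proof.
by rewrite /hdot mulr_sumr; apply: eq_bigr => j _; rewrite !mxE rmorphM mulrCA.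
Qed.

Lemma hdotC u v : hdot v u = (hdot u v)^*.
Proof.
rewrite /hdot rmorph_sum; apply: eq_bigr => j _.
by rewrite rmorphM /= conjCK mulrC.
Qed.

Lemma centre_head (j : 'I_n.+1) : (j < n)%N -> centre j 0 = 0.
Proof. by rewrite ltn_ord_max /centre mxE => /negbTE ->. Qed.

Lemma centre_last : centre ord_max 0 = 1.
Proof. by rewrite /centre mxE !eqxx. Qed.

Lemma centre_neq0 : centre != 0.
Proof.
apply/eqP => /matrixP/(_ ord_max 0).
by rewrite centre_last mxE => /eqP; rewrite oner_eq0.
Qed.

Lemma hdot_centrel v : hdot centre v = 0.
Proof. by rewrite /hdot big1 // => j /centre_head ->; rewrite mul0r. Qed.

Lemma hdot_centrer u : hdot u centre = 0.
Proof. by rewrite /hdot big1 // => j /centre_head ->; rewrite rmorph0 mulr0. Qed.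

Lemma head_sq_centre : head_sq centre = 0.
Proof. by rewrite head_sqE hdot_centrel. Qed.

Lemma centre_inB : inB centre.
Proof. by rewrite /inB head_sq_centre /last_sq centre_last normr1 expr1n ltr01. Qed.

Lemma head_sqDZ u v t : head_sq (u + t *: v) =
  head_sq u + t^* * hdot u v + t * hdot v u + t * t^* * head_sq v.
Proof. by rewrite !head_sqE !hdotDl !hdotDr !hdotZl !hdotZr; ring. Qed.

Lemma head_sqDZ_centre u t : head_sq (u + t *: centre) = head_sq u.
Proof. by rewrite head_sqDZ hdot_centrer hdot_centrel head_sq_centre !mulr0 !addr0. Qed.

Lemma head_sqZ c u : head_sq (c *: u) = c * c^* * head_sq u.
Proof. by rewrite !head_sqE hdotZl hdotZr mulrA. Qed.

Lemma last_sqZ c u : last_sq (c *: u) = c * c^* * last_sq u.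
Proof. by rewrite !last_sqE !mxE rmorphM mulrACA. Qed.

Lemma head_sq0 : head_sq (0 : cv) = 0.
Proof. by rewrite /head_sq big1 // => j _; rewrite mxE normr0 expr0n. Qed.

Lemma head_sq_ge0 u : 0 <= head_sq u.
Proof. by apply: sumr_ge0 => j _; rewrite exprn_ge0. Qed.

Lemma head_sq_eq0 u : head_sq u = 0 -> forall j : 'I_n.+1, (j < n)%N -> u j 0 = 0.
Proof.
move=> u0 j ltjn.
have := psumr_eq0P (fun i _ => exprn_ge0 2 (normr_ge0 (u i 0))) u0 ltjn.
by move/eqP; rewrite sqrf_eq0 normr_eq0 => /eqP.
Qed.

Lemma head_sq_delta (j : 'I_n.+1) : (j < n)%N -> head_sq (delta_mx j 0 : cv) = 1.
Proof.
move=> ltjn; rewrite /head_sq (bigD1 j) //= big1 => [|l /andP[_ /negbTE njl]].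
  by rewrite mxE !eqxx normr1 expr1n addr0.
by rewrite mxE njl normr0 expr0n.
Qed.

Lemma cV_eq_centre u :
  (forall j : 'I_n.+1, (j < n)%N -> u j 0 = 0) -> u = u ord_max 0 *: centre.
Proof.
move=> u_head; apply/matrixP => i j; rewrite (ord1 j) mxE.
case: (boolP (i < n)%N) => [ltin | ]; first by rewrite u_head // centre_head // mulr0.
by rewrite ltn_ord_max negbK => /eqP ->; rewrite centre_last mulr1.
Qed.

Lemma Jform_diag : J = diag_mx (\row_i (if (i < n)%N then 1 else -1)).
Proof.
by apply/matrixP => i j; rewrite !mxE; case: eqP => [->|]; rewrite ?mulr1n ?mulr0n.
Qed.

Lemma sformJ u v : sform J u v = hdot u v - u ord_max 0 * (v ord_max 0)^*.
Proof.
rewrite Jform_diag /sform mul_mx_diag !mxE big_ord_max !mxE ltnn mulrN1 mulNr mulrC.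
by congr (_ - _); apply: eq_bigr => j ltjn; rewrite !mxE ltjn mulr1 mulrC.
Qed.

Lemma sformJ_diag u : sform J u u = head_sq u - last_sq u.
Proof. by rewrite sformJ head_sqE last_sqE. Qed.


Lemma preserves_formE A : preserves_form A = (adjmx A *m J *m A = J).
Proof. by []. Qed.

Lemma Jform_invol : J *m J = 1%:M.
Proof.
apply/matrixP => i j; rewrite {1}Jform_diag mul_diag_mx !mxE eq_sym.
by case: eqP => _; rewrite ?mulr0 //; case: ifP; rewrite ?mulr1 ?mulrNN ?mulr1.
Qed.

Lemma preserves_form_unit A : preserves_form A -> A \in unitmx.
Proof.
by move=> /(congr1 (mulmx J)); rewrite Jform_invol !mulmxA => /mulmx1_unit[].
Qed.

Lemma preserves_formM A B :
  preserves_form A -> preserves_form B -> preserves_form (A *m B).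
Proof.
rewrite !preserves_formE adjmxM => A_form B_form.
by rewrite !mulmxA -!(mulmxA (adjmx B)) A_form mulmxA.
Qed.

Lemma preserves_formV A : preserves_form A -> preserves_form (invmx A).
Proof.
move=> A_form; have A_unit := preserves_form_unit A_form.
rewrite preserves_formE -{1}A_form !mulmxA -adjmxM mulmxV // adjmx1 mul1mx.
by rewrite -mulmxA mulmxV ?mulmx1.
Qed.

Section CentreStabilizer.
Variables (B : 'M[C]_(n.+1)) (lam : C).
Hypotheses (B_form : preserves_form B) (B_centre : B *m centre = lam *: centre).

Let B_sform u v : sform J (B *m u) (B *m v) = sform J u v.
Proof. by rewrite -sform_adj B_form. Qed.

Let sformJ_centre u : sform J u centre = - u ord_max 0.
Proof. by rewrite sformJ hdot_centrer centre_last rmorph1 mulr1 sub0r. Qed.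

Lemma stab_centre_norm : lam * lam^* = 1.
Proof.
have := B_sform centre centre; rewrite B_centre sformZl sformZr !sformJ_centre.
by rewrite centre_last mulrN1 mulrN => /oppr_inj.
Qed.

Lemma stab_centre_last w : (B *m w) ord_max 0 = lam * w ord_max 0.
Proof.
have := B_sform w centre; rewrite B_centre sformZr !sformJ_centre mulrN => /oppr_inj.
by move=> <-; rewrite mulrA stab_centre_norm mul1r.
Qed.

Lemma stab_centre_sq w :
  head_sq (B *m w) = head_sq w /\ last_sq (B *m w) = last_sq w.
Proof.
have last_eq : last_sq (B *m w) = last_sq w.
  by rewrite !last_sqE stab_centre_last rmorphM mulrACA stab_centre_norm mul1r.
by split => //; have := B_sform w w; rewrite !sformJ_diag last_eq => /addIr.
Qed.

Lemma stab_centre_maps_T_onto c r : c != 0 -> maps_T_onto (c *: B) r.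
Proof.
move=> c_neq0; have B_unit := preserves_form_unit B_form; split.
  move=> z _; rewrite /inT => z_T; have [head_eq last_eq] := stab_centre_sq z.
  by rewrite -scalemxAl head_sqZ last_sqZ head_eq last_eq z_T mulrCA.
move=> w w_neq0 w_T; exists (invmx B *m w).
  by apply: contra w_neq0 => /eqP w0; rewrite -(mulKVmx B_unit w) w0 mulmx0.
split; last by exists c => //; rewrite -scalemxAl mulKVmx.
have [head_eq last_eq] := stab_centre_sq (invmx B *m w).
by rewrite /inT -head_eq -last_eq mulKVmx.
Qed.

End CentreStabilizer.

Section Boost.
Variables (x : cv) (s : C).
Hypotheses (x_last : x ord_max 0 = 0) (s_pos : 0 < s)
  (x_norm : hdot x x = 1 - (s ^+ 2)^-1).

(* The complex hyperbolic boost along [x], with [s] playing the role of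
   [cosh]: it fixes the vectors orthogonal to [x] and [centre] and moves the
   centre to [s (x + centre)]. *)
Definition boost : 'M[C]_(n.+1) := 1%:M + (s ^+ 2 / (1 + s)) *: (x *m adjmx x)
  + s *: (x *m adjmx centre) + s *: (centre *m adjmx x)
  + (s - 1) *: (centre *m adjmx centre).

Lemma boost_mul w : boost *m w =
  w + (s ^+ 2 / (1 + s) * hdot w x + s * w ord_max 0) *: x
    + (s * hdot w x + (s - 1) * w ord_max 0) *: centre.
Proof.
have x_adj : adjmx x *m w = (hdot w x)%:M.
  rewrite [LHS]mx11_scalar mxE big_ord_max !mxE x_last rmorph0 mul0r addr0 /hdot.
  by congr (_%:M); apply: eq_bigr => j _; rewrite !mxE mulrC.
have centre_adj : adjmx centre *m w = (w ord_max 0)%:M.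
  by rewrite [LHS]mx11_scalar /centre adjmx_delta -rowE mxE.
rewrite /boost !mulmxDl mul1mx -!scalemxAl -!mulmxA x_adj centre_adj !mul_mx_scalar.
by apply/matrixP => i j; rewrite !mxE; ring.
Qed.

Lemma boost_centre : boost *m centre = s *: (x + centre).
Proof.
rewrite boost_mul hdot_centrel centre_last.
by apply/matrixP => i j; rewrite !mxE; ring.
Qed.

Lemma boost_form : preserves_form boost.
Proof.
have s_real : s^* = s by rewrite conj_Creal // gtr0_real.
have s_neq0 : s != 0 by rewrite gt_eqF.
have s1_neq0 : 1 + s != 0 by rewrite gt_eqF // addr_gt0 // ltr01.
rewrite preserves_formE -[RHS]scale1r; apply: adjmx_congr_scale => w.
rewrite boost_mul !sformJ !coordDZ x_last centre_last !hdotDl !hdotDr !hdotZl !hdotZr.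
rewrite !hdot_centrel !hdot_centrer (hdotC w x) x_norm.
rewrite !mulr0 !mulr1 !addr0 !rmorphD !rmorphM /= rmorphB fmorphV /= rmorphD.
rewrite !rmorph1 /= !s_real.
by field; rewrite s1_neq0 s_neq0.
Qed.

End Boost.

Lemma ball_point_boost z : inB z ->
  exists k, preserves_form k /\ exists2 c, c != 0 & k *m centre = c *: z.
Proof.
move=> z_B; set zn := z ord_max 0.
have zn_neq0 : zn != 0.
  apply: contraTneq z_B => zn0; rewrite /inB /last_sq -/zn zn0 normr0 expr2 mulr0.
  by apply/negP => /(le_lt_trans (head_sq_ge0 z)); rewrite ltxx.
set x := zn^-1 *: z + (-1) *: centre.
have x_last : x ord_max 0 = 0.
  by rewrite coordDZ [(_ *: z) _ _]mxE -/zn mulVf // centre_last mulr1 subrr.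
have x_norm : hdot x x = zn^-1 * zn^-1^* * head_sq z.
  rewrite /x !hdotDl !hdotDr !hdotZl !hdotZr !hdot_centrel !hdot_centrer.
  by rewrite !mulr0 !addr0 head_sqE mulrA.
have x_lt1 : hdot x x < 1.
  rewrite x_norm fmorphV -invfM mulrC ltr_pdivrMr ?mul_conjC_gt0 //.
  by rewrite mul1r -last_sqE.
set s := (sqrtC (1 - hdot x x))^-1.
have s_pos : 0 < s by rewrite invr_gt0 sqrtC_gt0 subr_gt0.
have x_s : hdot x x = 1 - (s ^+ 2)^-1.
  by rewrite /s exprVn invrK sqrtCK opprB addrC subrK.
exists (boost x s); split; first exact: boost_form.
exists (s * zn^-1); first exact: mulf_neq0 (lt0r_neq0 s_pos) (invr_neq0 zn_neq0).
by rewrite boost_centre // /x scaleN1r subrK scalerA.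
Qed.

Lemma elliptic_maps_T_onto g : elliptic_PU g ->
  exists2 k, k \in unitmx & forall r : C, maps_T_onto (invmx k *m g *m k) r.
Proof.
move=> [A [A_form [[c c_neq0 ->] [z [_ [z_B [lam Az]]]]]]].
have [k [k_form [d d_neq0 kd]]] := ball_point_boost z_B.
have k_unit := preserves_form_unit k_form.
exists k => // r; rewrite -scalemxAr -scalemxAl.
apply: (@stab_centre_maps_T_onto _ lam) => //.
  exact/preserves_formM/k_form/preserves_formM/A_form/preserves_formV.
rewrite -!mulmxA kd -!scalemxAr Az -scalemxAr scalerA mulrC -scalerA scalemxAr -kd.
by rewrite mulKmx.
Qed.

Definition maps_T_into g :=
  forall r : C, 0 < r -> forall z, z != 0 -> inT r z -> inT r (g *m z).

Section MapsTInto.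
Variables (g : 'M[C]_(n.+1)) (gT : maps_T_into g).

Let mu := g ord_max ord_max.

(* [w + t centre] lies on [T(head_sq w / t^2)] for every [t > 0]; the resulting
   polynomial identity in [t] has degree 4, so its coefficients vanish. *)
Lemma maps_T_into_coef w : w ord_max 0 = 0 -> 0 < head_sq w ->
  [/\ head_sq w * last_sq (g *m w) = 0,
      head_sq (g *m w) = head_sq w * last_sq (g *m centre) &
      head_sq (g *m centre) = 0].
Proof.
move=> w_last w_pos; set c := g *m centre; set Hw := head_sq w.
set a := (g *m w) ord_max 0; set b := c ord_max 0.
pose X := hdot (g *m w) c + hdot c (g *m w).
pose p := Poly [:: - (Hw * last_sq (g *m w)); - (Hw * (a * b^* + b * a^*));
  head_sq (g *m w) - Hw * last_sq c; X; head_sq c].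
suff p0 : p = 0.
  have coef_p i : p`_i = 0 by rewrite p0 coef0.
  move: (coef_p 0%N) (coef_p 2%N) (coef_p 4%N); rewrite !coef_Poly /=.
  by move=> /eqP; rewrite oppr_eq0 => /eqP ? /eqP; rewrite subr_eq0 => /eqP.
apply: (@poly_nat_roots_eq0 _ _ 5); first exact: size_Poly.
move=> k /andP[k_gt0 _]; set t : C := k%:R.
have tc : t^* = t by rewrite conjC_nat.
have t_neq0 : t != 0 by rewrite pnatr_eq0 -lt0n.
have z_head : head_sq (w + t *: centre) = Hw by rewrite head_sqDZ_centre.
have z_last : last_sq (w + t *: centre) = t ^+ 2.
  by rewrite last_sqE coordDZ w_last centre_last add0r mulr1 tc.
have z_neq0 : w + t *: centre != 0.
  apply/eqP => z0; move: z_last; rewrite z0 /last_sq mxE normr0 expr0n => /esym/eqP.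
  by rewrite expf_eq0 (negbTE t_neq0) andbF.
have r_pos : 0 < Hw / t ^+ 2 by rewrite divr_gt0 // exprn_gt0 // ltr0n.
have := gT r_pos z_neq0; rewrite /inT z_head z_last divfK ?expf_neq0 // => /(_ erefl).
rewrite mulmxDr -scalemxAr -/c head_sqDZ last_sqE coordDZ -/a -/b tc => Tgz.
rewrite horner_Poly /=.
transitivity (t ^+ 2 * (head_sq (g *m w) + t * hdot (g *m w) c +
    t * hdot c (g *m w) + t * t * head_sq c) -
    Hw * ((a + t * b) * (a + t * b)^*)).
  by rewrite /X !last_sqE rmorphD rmorphM /= tc -/a -/b; ring.
by rewrite Tgz; field; rewrite t_neq0.
Qed.

Hypothesis n_gt0 : (0 < n)%N.

Let delta_last (j : 'I_n.+1) : (j < n)%N -> (delta_mx j 0 : cv) ord_max 0 = 0.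
Proof. by rewrite mxE ltn_ord_max eq_sym => /negbTE ->. Qed.

Let delta_pos (j : 'I_n.+1) : (j < n)%N -> 0 < head_sq (delta_mx j 0 : cv).
Proof. by move=> ltjn; rewrite head_sq_delta // ltr01. Qed.

Lemma maps_T_into_last_row (j : 'I_n.+1) : (j < n)%N -> g ord_max j = 0.
Proof.
move=> ltjn; have [gj0 _ _] := maps_T_into_coef (delta_last ltjn) (delta_pos ltjn).
move: gj0; rewrite head_sq_delta // mul1r last_sqE -colE mxE.
by move/eqP; rewrite mul_conjC_eq0 => /eqP.
Qed.

Lemma maps_T_into_last w : (g *m w) ord_max 0 = mu * w ord_max 0.
Proof.
rewrite mxE big_ord_max big1 ?add0r // => j ltjn.
by rewrite maps_T_into_last_row ?mul0r.
Qed.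

Lemma maps_T_into_centre : g *m centre = mu *: centre.
Proof.
have o_lt_n : ((ord0 : 'I_n.+1) < n)%N by [].
have [_ _ /head_sq_eq0 c_head] :=
  maps_T_into_coef (delta_last o_lt_n) (delta_pos o_lt_n).
by rewrite {1}(cV_eq_centre c_head) maps_T_into_last centre_last mulr1.
Qed.

Lemma maps_T_into_head w : w ord_max 0 = 0 ->
  head_sq (g *m w) = `|mu| ^+ 2 * head_sq w.
Proof.
move=> w_last; have := head_sq_ge0 w; rewrite le_eqVlt => /orP[/eqP w0 | w_pos].
  have -> : w = 0 by rewrite (cV_eq_centre (head_sq_eq0 (esym w0))) w_last scale0r.
  by rewrite mulmx0 head_sq0 mulr0.
have [_ -> _] := maps_T_into_coef w_last w_pos.
by rewrite maps_T_into_centre mulrC /last_sq mxE centre_last mulr1.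
Qed.

Lemma maps_T_into_sformJ w :
  sform J (g *m w) (g *m w) = `|mu| ^+ 2 * sform J w w.
Proof.
set w' := w + (- w ord_max 0) *: centre.
have w'_last : w' ord_max 0 = 0 by rewrite coordDZ centre_last mulr1 subrr.
have -> : g *m w = g *m w' + (w ord_max 0 * mu) *: centre.
  by rewrite -scalerA -maps_T_into_centre scalemxAr -mulmxDr /w' scaleNr subrK.
rewrite !sformJ_diag head_sqDZ_centre maps_T_into_head // !last_sqE coordDZ.
rewrite maps_T_into_last w'_last /w' head_sqDZ_centre.
by rewrite centre_last mulr0 mulr1 add0r rmorphM normCK /=; ring.
Qed.

Lemma maps_T_into_elliptic : g \in unitmx -> elliptic_PU g.
Proof.
move=> g_unit; have mu_neq0 : mu != 0.
  apply: contra_neq (centre_neq0) => mu0.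
  by rewrite -(mulKmx g_unit centre) maps_T_into_centre mu0 scale0r mulmx0.
have g_form : adjmx g *m J *m g = `|mu| ^+ 2 *: J.
  exact: adjmx_congr_scale maps_T_into_sformJ.
exists (mu^-1 *: g); split; [|split].
- rewrite preserves_formE adjmxZ -!scalemxAl -scalemxAr g_form !scalerA.
  rewrite normCK fmorphV /=.
  rewrite [X in X *: J](_ : _ = 1) ?scale1r //.
  by field; rewrite conjC_eq0 mu_neq0.
- by exists mu => //; rewrite scalerA divff // scale1r.
exists centre; split; first exact: centre_neq0.
split; first exact: centre_inB.
by exists 1; rewrite -scalemxAl maps_T_into_centre scalerA mulVf // scale1r.
Qed.

End MapsTInto.

End ComplexBall.

(* Elements of PSL(n+1,C) are represented by matrices of determinant 1. *)
Theorem mainTheorem12 (R : realType) (n : nat) (hn : (1 <= n)%N)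
    (gamma : 'M[R[i]]_(n.+1)) (hgamma : \det gamma = 1) :
  (exists h : 'M[R[i]]_(n.+1), \det h = 1 /\
     forall r : R[i], 0 < r -> maps_T_onto (invmx h *m gamma *m h) r)
  <->
  (exists h : 'M[R[i]]_(n.+1), \det h = 1 /\
     elliptic_PU (invmx h *m gamma *m h)).
Proof.
split=> [[h [det_h h_T]] | [h [det_h h_ell]]].
  exists h; split => //; apply: maps_T_into_elliptic hn _.
    by move=> r r_pos; apply: (h_T r r_pos).1.
  by rewrite !unitmx_mul unitmx_inv !unitmxE det_h hgamma unitr1.
have h_unit : h \in unitmx by rewrite unitmxE det_h unitr1.
have [k k_unit k_T] := elliptic_maps_T_onto h_ell.
have [rho rho_neq0 det_rk] := det_scale_eq1 k_unit.
exists (h *m (rho *: k)); split; first by rewrite det_mulmx det_h det_rk mul1r.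
by move=> r _; rewrite invmx_conj_mulZ.
Qed.
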